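(* Let $0<A<B$, let $z\in \mathbb{C}\setminus\{0\}$ and $Y>0$. Then $$\int_{-\pi}^{\pi} \int_{A}^{B} \min\left\{\|\Im(zRe^{\theta i})\|^{-1}, Y\right\}^{1/2} \cdot \min\left\{\|\Re(zRe^{\theta i})\|^{-1}, Y\right\}^{1/2} \, dR \, d\theta \ll_{A,B} \max\{1,|z|^{-1}\}\log (2+Y),$$ where the implied constant depends only on $A$ and $B$.
   Context: For $x\in\mathbb{R}$, $\|x\|$ denotes the distance from $x$ to the nearest integer (with $\|x\|^{-1}=\infty$ if $x\in\mathbb{Z}$, so the minimum is then $Y$). *)

From Stdlib Require Import Reals.
From Coquelicot Require Import Coquelicot.
Open Scope R_scope.

Definition dist_int (x : R) : R := Rmin (frac_part x) (1 - frac_part x).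

(* min{ ||x||^{-1}, Y }, with the convention ||x||^{-1} = +oo when x is an integer. *)
Definition capinv (x Y : R) : R :=
  if Req_EM_T (dist_int x) 0 then Y else Rmin (/ dist_int x) Y.

Definition cexpi (t : R) : C := (cos t, sin t).

Definition integrand (z : C) (Y t r : R) : R :=
  let w := Cmult z (Cmult (RtoC r) (cexpi t)) in
  sqrt (capinv (Im w) Y) * sqrt (capinv (Re w) Y).

From Stdlib Require Import Reals Lra Lia Psatz ZArith.
From Coquelicot Require Import Coquelicot.
Open Scope R_scope.

(* Bounding the product of the two square roots by their arithmetic mean separates the two
   factors, each of which is a radial integral of [capinv (r * k) Y] with [k] the imaginary or
   real part of [z e^{it}].  As [|sin (PI x)| / PI <= dist_int x], one has
   [capinv x Y <= sqrt 2 / sqrt (s^2 + Y^-2)] with [s = sin (PI x) / PI], so everything reduces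
   to integrals of [1 / sqrt (s^2 + eps^2)] along a sinusoid [s] of amplitude [rho] and
   frequency [w].  Writing [rho^2 = s^2 + (s'/w)^2] and integrating by parts against
   [arsinh (s / eps)], [rho] times such an integral over an interval of length [L] is at most
   [L (1 + log (1 + 2 rho / eps)) + 2 log (1 + 2 rho / eps) / |w|].
   Radially ([rho = 1/PI], [w = PI k]) this is [O (log (2 + Y))] as soon as [|k| B > 1/2]; for
   smaller [|k|] the radial integrand is bounded by its value at [r = A], whose integral over
   [t] is again a sinusoid integral, of amplitude [A |z|], hence [O (max (1, 1/|z|) log (2 + Y))]. *)

Lemma abs_sin_le (t : R) : Rabs (sin t) <= Rabs t.
Proof.
  assert (Hpos : forall u, 0 < u -> - u <= sin u <= u).
  { intros u Hu. split; [| left; apply sin_lt_x; exact Hu].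
    destruct (Rle_dec u PI).
    - assert (0 <= sin u) by (apply sin_ge_0; lra). lra.
    - pose proof (SIN_bound u). pose proof PI2_1. lra. }
  destruct (Rtotal_order t 0) as [Ht | [-> | Ht]].
  - destruct (Hpos (- t)) as [H1 H2]; [lra |]. rewrite sin_neg in *.
    unfold Rabs; repeat destruct Rcase_abs; lra.
  - rewrite sin_0. lra.
  - destruct (Hpos t) as [H1 H2]; [lra |].
    unfold Rabs; repeat destruct Rcase_abs; lra.
Qed.

Lemma sqrt_mul_sqrt_le (u v : R) : 0 <= u -> 0 <= v -> sqrt u * sqrt v <= / 2 * (u + v).
Proof.
  intros Hu Hv. pose proof (sqrt_sqrt u Hu). pose proof (sqrt_sqrt v Hv).
  pose proof (Rle_0_sqr (sqrt u - sqrt v)). unfold Rsqr in *. nra.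
Qed.

Lemma sqrt_lipschitz_ge (m u v : R) : 0 < m -> m <= u -> m <= v ->
  Rabs (sqrt u - sqrt v) <= / (2 * sqrt m) * Rabs (u - v).
Proof.
  intros Hm Hu Hv. pose proof (sqrt_lt_R0 m Hm).
  assert (sqrt m <= sqrt u) by (apply sqrt_le_1_alt; exact Hu).
  assert (sqrt m <= sqrt v) by (apply sqrt_le_1_alt; exact Hv).
  pose proof (sqrt_sqrt u ltac:(lra)). pose proof (sqrt_sqrt v ltac:(lra)).
  replace (u - v) with ((sqrt u - sqrt v) * (sqrt u + sqrt v)) by lra.
  rewrite Rabs_mult, (Rabs_pos_eq (sqrt u + sqrt v)) by lra.
  apply Rmult_le_reg_l with (2 * sqrt m); [lra |].
  rewrite <- Rmult_assoc, Rinv_r, Rmult_1_l by lra.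
  pose proof (Rabs_pos (sqrt u - sqrt v)). nra.
Qed.

Lemma ln_2_plus_gt_half (Y : R) : 0 <= Y -> / 2 < ln (2 + Y).
Proof.
  intro HY. apply Rlt_le_trans with (ln 2); [exact ln_lt_2 |]. apply ln_le; lra.
Qed.

Lemma ln_1_plus_mul_le (x Y : R) : 0 <= x -> 0 <= Y -> ln (1 + x * Y) <= x + ln (2 + Y).
Proof.
  intros Hx HY.
  apply Rle_trans with (ln ((1 + x) * (2 + Y))); [apply ln_le; nra |].
  rewrite ln_mult by lra. apply Rplus_le_compat_r.
  rewrite <- (ln_exp x) at 2. apply ln_le; [lra | apply exp_ineq1_le].
Qed.

Lemma continuous_lipschitz_at (f : R -> R) (M x : R) :
  (forall y, Rabs (f y - f x) <= M * Rabs (y - x)) -> continuous f x.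
Proof.
  intro Hf. apply continuity_pt_filterlim.
  intros eps Heps. pose proof (Rabs_pos M).
  exists (eps / (Rabs M + 1)). split; [apply Rdiv_lt_0_compat; lra |].
  intros y [_ Hy]. simpl in *. unfold R_dist in *.
  apply Rle_lt_trans with ((Rabs M + 1) * Rabs (y - x)).
  - pose proof (Hf y). pose proof (Rabs_pos (y - x)). pose proof (Rle_abs M). nra.
  - apply Rmult_lt_compat_l with (r := Rabs M + 1) in Hy; [| lra].
    replace ((Rabs M + 1) * (eps / (Rabs M + 1))) with eps in Hy by (field; lra). exact Hy.
Qed.

Lemma RInt_le_is_RInt (f g : R -> R) (a b I : R) : a <= b ->
  ex_RInt f a b -> is_RInt g a b I -> (forall x, a < x < b -> f x <= g x) -> RInt f a b <= I.
Proof.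
  intros Hab Hf Hg Hfg. rewrite <- (is_RInt_unique g a b I Hg).
  apply RInt_le; [exact Hab | exact Hf | exists I; exact Hg | exact Hfg].
Qed.

Lemma is_RInt_const_plus (f : R -> R) (k a b I : R) :
  is_RInt f a b I -> is_RInt (fun u => k + f u) a b ((b - a) * k + I).
Proof. intro Hf. exact (is_RInt_plus _ _ a b _ _ (is_RInt_const a b k) Hf). Qed.

Lemma continuous_RInt_lipschitz_param (f : R -> R -> R) (a b M t0 : R) : a <= b ->
  (forall t, ex_RInt (f t) a b) ->
  (forall t r, a <= r <= b -> Rabs (f t r - f t0 r) <= M * Rabs (t - t0)) ->
  continuous (fun t => RInt (f t) a b) t0.
Proof.
  intros Hab Hf HM. apply continuous_lipschitz_at with ((b - a) * M). intro t.
  replace (RInt (f t) a b - RInt (f t0) a b) with (RInt (fun r => f t r - f t0 r) a b)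
    by exact (RInt_minus (V := R_CompleteNormedModule) _ _ a b (Hf t) (Hf t0)).
  rewrite Rmult_assoc. apply abs_RInt_le_const; [exact Hab | | exact (HM t)].
  exact (ex_RInt_minus (V := R_NormedModule) _ _ a b (Hf t) (Hf t0)).
Qed.

Lemma dist_int_attained (x : R) : exists n : Z, dist_int x = Rabs (x - IZR n).
Proof.
  unfold dist_int, frac_part. destruct (base_Int_part x) as [Hlo Hhi].
  set (m := Int_part x) in *.
  unfold Rmin. destruct (Rle_dec (x - IZR m) (1 - (x - IZR m))).
  - exists m. rewrite Rabs_right; lra.
  - exists (m + 1)%Z. rewrite plus_IZR, Rabs_left; lra.
Qed.

Lemma dist_int_le (x : R) (n : Z) : dist_int x <= Rabs (x - IZR n).
Proof.
  unfold dist_int, frac_part. destruct (base_Int_part x) as [Hlo Hhi].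
  set (m := Int_part x) in *.
  destruct (Z_le_gt_dec n m) as [Hn | Hn].
  - apply IZR_le in Hn. apply Rle_trans with (x - IZR m); [apply Rmin_l |].
    rewrite Rabs_right; lra.
  - assert (Hn' : (m + 1 <= n)%Z) by lia. apply IZR_le in Hn'. rewrite plus_IZR in Hn'.
    apply Rle_trans with (1 - (x - IZR m)); [apply Rmin_r |].
    rewrite Rabs_left; lra.
Qed.

Lemma dist_int_ge0 (x : R) : 0 <= dist_int x.
Proof. destruct (dist_int_attained x) as [n ->]. apply Rabs_pos. Qed.

Lemma dist_int_le_half (x : R) : dist_int x <= / 2.
Proof. unfold dist_int, Rmin. destruct (Rle_dec _ _); lra. Qed.

Lemma dist_int_lipschitz (x y : R) : dist_int x <= dist_int y + Rabs (x - y).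
Proof.
  destruct (dist_int_attained y) as [n ->].
  apply Rle_trans with (Rabs (x - IZR n)); [apply dist_int_le |].
  replace (x - IZR n) with ((x - y) + (y - IZR n)) by ring.
  rewrite Rplus_comm. apply Rabs_triang.
Qed.

Lemma dist_int_small (x : R) : Rabs x <= / 2 -> dist_int x = Rabs x.
Proof.
  intro Hx. apply Rle_antisym.
  - pose proof (dist_int_le x 0) as H. rewrite Rminus_0_r in H. exact H.
  - destruct (dist_int_attained x) as [n ->].
    destruct (Z.eq_dec n 0) as [-> | Hn0]; [rewrite Rminus_0_r; lra |].
    assert (Hn : 1 <= Rabs (IZR n)).
    { rewrite <- abs_IZR. apply IZR_le. lia. }
    pose proof (Rabs_triang_inv (IZR n) x). rewrite Rabs_minus_sym. lra.
Qed.

Lemma abs_sin_PI_mul_le (x : R) : Rabs (sin (PI * x)) <= PI * dist_int x.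
Proof.
  destruct (dist_int_attained x) as [n ->].
  assert (Hsin : sin (IZR n * PI) = 0) by (apply sin_eq_0_1; eauto).
  replace (PI * x) with (PI * (x - IZR n) + IZR n * PI) by ring.
  rewrite sin_plus, Hsin, Rmult_0_r, Rplus_0_r, Rabs_mult.
  pose proof (abs_sin_le (PI * (x - IZR n))) as Hs.
  rewrite Rabs_mult, (Rabs_right PI) in Hs by (left; apply PI_RGT_0).
  assert (Rabs (cos (IZR n * PI)) <= 1) by (apply Rabs_le, COS_bound).
  pose proof (Rabs_pos (sin (PI * (x - IZR n)))). nra.
Qed.

Definition rhyp (eps x : R) : R := / sqrt (x² + eps²).

(* [arsinh (x / eps)] *)
Definition rhyp_prim (eps x : R) : R := ln (x + sqrt (x² + eps²)) - ln eps.

Section Rhyp.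
Variable eps : R.
Hypothesis eps_gt0 : 0 < eps.

Lemma hypot_gt0 (x : R) : 0 < x² + eps².
Proof. unfold Rsqr. nra. Qed.

Lemma hypot_gt_abs (x : R) : Rabs x < sqrt (x² + eps²).
Proof.
  rewrite <- sqrt_Rsqr_abs. apply sqrt_lt_1_alt. split; [apply Rle_0_sqr |].
  unfold Rsqr. nra.
Qed.

Lemma rhyp_gt0 (x : R) : 0 < rhyp eps x.
Proof. apply Rinv_0_lt_compat, sqrt_lt_R0, hypot_gt0. Qed.

Lemma continuous_rhyp (x : R) : continuous (rhyp eps) x.
Proof.
  apply (ex_derive_continuous (rhyp eps)). unfold rhyp. pose proof (hypot_gt0 x).
  auto_derive. pose proof (sqrt_lt_R0 _ H). repeat split; lra.
Qed.

Lemma sqr_mul_rhyp_le (x : R) : x² * rhyp eps x <= Rabs x.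
Proof.
  unfold rhyp. pose proof (hypot_gt_abs x). pose proof (Rabs_pos x).
  set (q := sqrt (x² + eps²)) in *. rewrite Rsqr_abs.
  apply Rmult_le_reg_r with q; [lra |].
  replace ((Rabs x)² * / q * q) with ((Rabs x)²) by (field; lra).
  unfold Rsqr. nra.
Qed.

Lemma rhyp_prim_arg_gt0 (x : R) : 0 < x + sqrt (x² + eps²).
Proof. pose proof (hypot_gt_abs x). unfold Rabs in *; destruct Rcase_abs; lra. Qed.

Lemma is_derive_rhyp_prim (x : R) : is_derive (rhyp_prim eps) x (rhyp eps x).
Proof.
  unfold rhyp_prim, rhyp. pose proof (hypot_gt0 x). pose proof (rhyp_prim_arg_gt0 x).
  auto_derive.
  - repeat split; lra.
  - pose proof (sqrt_lt_R0 _ H). set (q := sqrt (x² + eps²)) in *.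
    assert (Hq : q * q = x² + eps²) by (apply sqrt_sqrt; lra).
    unfold Rsqr in Hq. apply Rmult_eq_reg_r with (q * (x + q)); [| nra].
    field. lra.
Qed.

Lemma rhyp_prim_opp (x : R) : rhyp_prim eps (- x) = - rhyp_prim eps x.
Proof.
  unfold rhyp_prim. pose proof (rhyp_prim_arg_gt0 x). pose proof (rhyp_prim_arg_gt0 (- x)).
  rewrite <- Rsqr_neg in *. set (q := sqrt (x² + eps²)) in *.
  assert (Hq : q * q = x² + eps²) by (apply sqrt_sqrt; pose proof (hypot_gt0 x); lra).
  (* the two arguments multiply to eps^2 *)
  assert (ln (- x + q) + ln (x + q) = ln eps + ln eps).
  { rewrite <- !ln_mult by lra. f_equal. unfold Rsqr in Hq. nra. }
  lra.
Qed.

Lemma rhyp_prim_bounds (x : R) : 0 <= x -> 0 <= rhyp_prim eps x <= ln (1 + 2 * x / eps).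
Proof.
  intro Hx. unfold rhyp_prim. pose proof (rhyp_prim_arg_gt0 x). pose proof (hypot_gt0 x).
  set (q := sqrt (x² + eps²)) in *.
  assert (Hq : q * q = x² + eps²) by (apply sqrt_sqrt; lra).
  assert (0 <= q) by apply sqrt_pos.
  unfold Rsqr in Hq. split.
  - assert (ln eps <= ln (x + q)) by (apply ln_le; nra). lra.
  - replace (1 + 2 * x / eps) with ((2 * x + eps) / eps) by (field; lra).
    rewrite ln_div by lra.
    assert (ln (x + q) <= ln (2 * x + eps)) by (apply ln_le; nra). lra.
Qed.

Lemma abs_rhyp_prim_le (rho x : R) : Rabs x <= rho ->
  Rabs (rhyp_prim eps x) <= ln (1 + 2 * rho / eps).
Proof.
  intro Hx.
  assert (Hmono : ln (1 + 2 * Rabs x / eps) <= ln (1 + 2 * rho / eps)).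
  { pose proof (Rabs_pos x). apply ln_le.
    - assert (0 <= Rabs x / eps) by (apply Rdiv_le_0_compat; lra). lra.
    - unfold Rdiv. apply Rplus_le_compat_l, Rmult_le_compat_r; [| lra].
      left. apply Rinv_0_lt_compat. exact eps_gt0. }
  destruct (Rle_lt_dec 0 x) as [Hx0 | Hx0].
  - rewrite Rabs_right in * by lra.
    destruct (rhyp_prim_bounds x Hx0). rewrite Rabs_right; lra.
  - rewrite Rabs_left in * by lra.
    replace x with (- (- x)) by ring. rewrite rhyp_prim_opp, Rabs_Ropp.
    destruct (rhyp_prim_bounds (- x)) as [H1 H2]; [lra |]. rewrite Rabs_right; lra.
Qed.

End Rhyp.

Section Capinv.
Variable Y : R.
Hypothesis Y_gt0 : 0 < Y.

Lemma capinv_alt (x : R) : capinv x Y = Y / Rmax 1 (Y * dist_int x).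
Proof.
  unfold capinv. pose proof (dist_int_ge0 x).
  destruct (Req_EM_T (dist_int x) 0) as [-> | Hd].
  - rewrite Rmult_0_r, Rmax_left by lra. field.
  - assert (0 < dist_int x) by lra.
    unfold Rmin, Rmax. destruct (Rle_dec (/ dist_int x) Y) as [H1 | H1];
      destruct (Rle_dec 1 (Y * dist_int x)) as [H2 | H2].
    + field. lra.
    + exfalso. apply H2. apply Rmult_le_compat_r with (r := dist_int x) in H1; [| lra].
      rewrite Rinv_l in H1; lra.
    + exfalso. apply H1. apply Rmult_le_reg_r with (dist_int x); [lra |].
      rewrite Rinv_l; lra.
    + field.
Qed.

Lemma capinv_gt0 (x : R) : 0 < capinv x Y.
Proof.
  rewrite capinv_alt. pose proof (Rmax_l 1 (Y * dist_int x)).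
  apply Rdiv_lt_0_compat; lra.
Qed.

Lemma capinv_le (x : R) : capinv x Y <= Y.
Proof.
  rewrite capinv_alt. pose proof (Rmax_l 1 (Y * dist_int x)).
  apply Rmult_le_reg_r with (Rmax 1 (Y * dist_int x)); [lra |].
  unfold Rdiv. rewrite Rmult_assoc, Rinv_l by lra. nra.
Qed.

Lemma capinv_mul_dist_int_le (x : R) : capinv x Y * dist_int x <= 1.
Proof.
  rewrite capinv_alt. pose proof (Rmax_l 1 (Y * dist_int x)). pose proof (Rmax_r 1 (Y * dist_int x)).
  apply Rmult_le_reg_r with (Rmax 1 (Y * dist_int x)); [lra |].
  replace (Y / Rmax 1 (Y * dist_int x) * dist_int x * Rmax 1 (Y * dist_int x))
    with (Y * dist_int x) by (field; lra).
  lra.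
Qed.

Lemma capinv_ge_min (x : R) : Rmin 2 Y <= capinv x Y.
Proof.
  rewrite capinv_alt. pose proof (dist_int_le_half x). pose proof (dist_int_ge0 x).
  unfold Rmax. destruct (Rle_dec 1 (Y * dist_int x)).
  - apply Rle_trans with 2; [apply Rmin_l |].
    apply Rmult_le_reg_r with (Y * dist_int x); [lra |].
    replace (Y / (Y * dist_int x) * (Y * dist_int x)) with Y by (field; nra). nra.
  - rewrite Rdiv_1_r. apply Rmin_r.
Qed.

Lemma capinv_lipschitz (x y : R) : Rabs (capinv x Y - capinv y Y) <= Y² * Rabs (x - y).
Proof.
  rewrite !capinv_alt.
  set (Mx := Rmax 1 (Y * dist_int x)). set (My := Rmax 1 (Y * dist_int y)).
  assert (Hx : 1 <= Mx) by apply Rmax_l. assert (Hy : 1 <= My) by apply Rmax_l.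
  assert (HM : Rabs (My - Mx) <= Y * Rabs (x - y)).
  { pose proof (dist_int_lipschitz x y). pose proof (dist_int_lipschitz y x).
    rewrite Rabs_minus_sym in H0. apply Rabs_le. unfold Mx, My, Rmax.
    destruct (Rle_dec 1 (Y * dist_int x)); destruct (Rle_dec 1 (Y * dist_int y)); split; nra. }
  replace (Y / Mx - Y / My) with (Y * (My - Mx) / (Mx * My)) by (field; lra).
  unfold Rdiv. rewrite !Rabs_mult, Rabs_inv, (Rabs_pos_eq Y), (Rabs_pos_eq (Mx * My)) by nra.
  assert (Hinv : 0 < / (Mx * My) <= 1).
  { split; [apply Rinv_0_lt_compat; nra |]. rewrite <- Rinv_1. apply Rinv_le_contravar; nra. }
  pose proof (Rabs_pos (My - Mx)).
  assert (Rabs (My - Mx) * / (Mx * My) <= Y * Rabs (x - y)) by nra.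
  unfold Rsqr. rewrite Rmult_assoc, (Rmult_assoc Y Y).
  apply Rmult_le_compat_l; lra.
Qed.

Lemma continuous_capinv (x : R) : continuous (fun u => capinv u Y) x.
Proof. apply continuous_lipschitz_at with (Y²). intro. apply capinv_lipschitz. Qed.

Lemma capinv_le_rhyp (x s : R) : Rabs s <= dist_int x -> capinv x Y <= sqrt 2 * rhyp (/ Y) s.
Proof.
  intro Hs. unfold rhyp. pose proof (capinv_gt0 x) as Hc. pose proof (capinv_le x).
  pose proof (capinv_mul_dist_int_le x). pose proof (Rabs_pos s).
  assert (HiY : 0 < / Y) by (apply Rinv_0_lt_compat; lra).
  pose proof (sqrt_lt_R0 _ (hypot_gt0 (/ Y) HiY s)) as Hq.
  assert (Hsq : (capinv x Y)² * (s² + (/ Y)²) <= 2).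
  { assert (Hcs : capinv x Y * Rabs s <= 1) by nra.
    assert (HcY : capinv x Y * / Y <= 1).
    { apply Rmult_le_reg_r with Y; [lra |]. rewrite Rmult_assoc, Rinv_l; lra. }
    assert (0 <= capinv x Y * Rabs s) by nra.
    assert (0 <= capinv x Y * / Y) by nra.
    replace ((capinv x Y)² * (s² + (/ Y)²))
      with ((capinv x Y * Rabs s)² + (capinv x Y * / Y)²) by (rewrite (Rsqr_abs s); unfold Rsqr; ring).
    unfold Rsqr. nra. }
  rewrite <- (sqrt_Rsqr (capinv x Y)) by lra.
  apply Rmult_le_reg_r with (sqrt (s² + (/ Y)²)); [exact Hq |].
  rewrite Rmult_assoc, Rinv_l, Rmult_1_r, <- sqrt_mult_alt by (try apply Rle_0_sqr; lra).
  apply sqrt_le_1_alt. exact Hsq.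
Qed.

(* [|sin (PI x)| / PI <= dist_int x] trades the sawtooth [dist_int] for a smooth sinusoid. *)
Lemma capinv_le_rhyp_sin (x : R) : capinv x Y <= sqrt 2 * rhyp (/ Y) (/ PI * sin (PI * x)).
Proof.
  pose proof PI_RGT_0. apply capinv_le_rhyp.
  rewrite Rabs_mult, (Rabs_pos_eq (/ PI)) by (left; apply Rinv_0_lt_compat; lra).
  apply Rmult_le_reg_l with PI; [lra |].
  rewrite <- Rmult_assoc, Rinv_r, Rmult_1_l by lra. apply abs_sin_PI_mul_le.
Qed.

Lemma sqrt_capinv_lipschitz : exists M, 0 <= M /\ forall x y,
  Rabs (sqrt (capinv x Y) - sqrt (capinv y Y)) <= M * Rabs (x - y).
Proof.
  assert (Hm : 0 < Rmin 2 Y) by (apply Rmin_glb_lt; lra).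
  pose proof (sqrt_lt_R0 _ Hm).
  assert (0 < / (2 * sqrt (Rmin 2 Y))) by (apply Rinv_0_lt_compat; lra).
  exists (/ (2 * sqrt (Rmin 2 Y)) * Y²). split; [apply Rmult_le_pos; [lra | apply Rle_0_sqr] |].
  intros x y. rewrite Rmult_assoc.
  eapply Rle_trans; [apply sqrt_lipschitz_ge; [exact Hm | apply capinv_ge_min ..] |].
  apply Rmult_le_compat_l; [lra | apply capinv_lipschitz].
Qed.

Lemma sqrt_capinv_mul_lipschitz : exists M, 0 <= M /\ forall u1 u2 v1 v2,
  Rabs (sqrt (capinv u1 Y) * sqrt (capinv v1 Y) - sqrt (capinv u2 Y) * sqrt (capinv v2 Y))
  <= M * (Rabs (u1 - u2) + Rabs (v1 - v2)).
Proof.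
  destruct sqrt_capinv_lipschitz as [M [HM0 HM]].
  exists (sqrt Y * M). split; [apply Rmult_le_pos; [apply sqrt_pos | exact HM0] |].
  intros u1 u2 v1 v2.
  assert (Hb : forall x, 0 <= sqrt (capinv x Y) <= sqrt Y).
  { intro x. split; [apply sqrt_pos | apply sqrt_le_1_alt, capinv_le]. }
  replace (sqrt (capinv u1 Y) * sqrt (capinv v1 Y) - sqrt (capinv u2 Y) * sqrt (capinv v2 Y))
    with (sqrt (capinv u1 Y) * (sqrt (capinv v1 Y) - sqrt (capinv v2 Y))
          + sqrt (capinv v2 Y) * (sqrt (capinv u1 Y) - sqrt (capinv u2 Y))) by ring.
  eapply Rle_trans; [apply Rabs_triang |]. rewrite !Rabs_mult, !(Rabs_pos_eq (sqrt _)) by apply sqrt_pos.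
  pose proof (HM v1 v2). pose proof (HM u1 u2). pose proof (Hb u1). pose proof (Hb v2).
  pose proof (Rabs_pos (sqrt (capinv v1 Y) - sqrt (capinv v2 Y))).
  pose proof (Rabs_pos (sqrt (capinv u1 Y) - sqrt (capinv u2 Y))).
  assert (sqrt (capinv u1 Y) * Rabs (sqrt (capinv v1 Y) - sqrt (capinv v2 Y))
          <= sqrt Y * (M * Rabs (v1 - v2))) by (apply Rmult_le_compat; lra).
  assert (sqrt (capinv v2 Y) * Rabs (sqrt (capinv u1 Y) - sqrt (capinv u2 Y))
          <= sqrt Y * (M * Rabs (u1 - u2))) by (apply Rmult_le_compat; lra).
  lra.
Qed.

End Capinv.

Definition sinusoid (P Q t : R) : R := P * cos t + Q * sin t.

Lemma is_derive_sinusoid (P Q t : R) : is_derive (sinusoid P Q) t (sinusoid Q (- P) t).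
Proof. unfold sinusoid. auto_derive; [exact I | ring]. Qed.

Lemma sinusoid_sqr_add (P Q t : R) : (sinusoid P Q t)² + (sinusoid Q (- P) t)² = P² + Q².
Proof. unfold sinusoid, Rsqr. pose proof (sin2_cos2 t) as H. unfold Rsqr in H. nra. Qed.

Lemma abs_sinusoid_le (P Q rho t : R) : 0 <= rho -> P² + Q² = rho² ->
  Rabs (sinusoid P Q t) <= rho.
Proof.
  intros Hrho HPQ. rewrite <- (Rabs_pos_eq rho Hrho). apply Rsqr_le_abs_0.
  rewrite <- HPQ, <- (sinusoid_sqr_add P Q t). pose proof (Rle_0_sqr (sinusoid Q (- P) t)). lra.
Qed.

Lemma sinusoid_lipschitz (P Q rho t t0 : R) : 0 <= rho -> P² + Q² = rho² ->
  Rabs (sinusoid P Q t - sinusoid P Q t0) <= rho * Rabs (t - t0).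
Proof.
  intros Hrho HPQ. apply (bounded_variation _ (sinusoid Q (- P))).
  intros u _. split; [apply is_derive_sinusoid |].
  apply abs_sinusoid_le; [exact Hrho |]. rewrite <- Rsqr_neg, Rplus_comm. exact HPQ.
Qed.

Section SinusoidIntegral.
Variables eps P Q rho w : R.
Hypotheses (eps_gt0 : 0 < eps) (rho_ge0 : 0 <= rho) (amplitude : P² + Q² = rho²)
  (w_neq0 : w <> 0).

Let s (u : R) : R := sinusoid P Q (w * u).
Let c (u : R) : R := sinusoid Q (- P) (w * u).

Lemma continuous_rhyp_sinusoid (u : R) : continuous (fun v => rhyp eps (s v)) u.
Proof.
  apply (continuous_comp s (rhyp eps)); [| apply continuous_rhyp; exact eps_gt0].
  apply (ex_derive_continuous s). unfold s, sinusoid. auto_derive. exact I.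
Qed.

Lemma is_derive_sinusoid_rhyp_prim (u : R) :
  is_derive (fun v => c v * rhyp_prim eps (s v) / w) u
    ((c u)² * rhyp eps (s u) - s u * rhyp_prim eps (s u)).
Proof.
  assert (Hs : is_derive s u (w * c u)).
  { unfold s, c, sinusoid. auto_derive; [exact I | ring]. }
  assert (Hc : is_derive c u (- (w * s u))).
  { unfold s, c, sinusoid. auto_derive; [exact I | ring]. }
  assert (HH := is_derive_comp (rhyp_prim eps) s u _ _ (is_derive_rhyp_prim eps eps_gt0 (s u)) Hs).
  assert (Hprod := is_derive_mult c (fun v => rhyp_prim eps (s v)) u _ _ Hc HH Rmult_comm).
  assert (Hdiv := is_derive_scal _ u (/ w) _ Hprod).
  replace ((c u)² * rhyp eps (s u) - s u * rhyp_prim eps (s u))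
    with (/ w * plus (mult (- (w * s u)) (rhyp_prim eps (s u)))
                     (mult (c u) (scal (w * c u) (rhyp eps (s u))))).
  - apply (is_derive_ext (fun v => / w * (c v * rhyp_prim eps (s v)))); [| exact Hdiv].
    intro v. apply Rmult_comm.
  - unfold plus, mult, scal; simpl. unfold mult; simpl. unfold Rsqr. field. exact w_neq0.
Qed.

Lemma continuous_sinusoid_rhyp_prim_derive (u : R) :
  continuous (fun v => (c v)² * rhyp eps (s v) - s v * rhyp_prim eps (s v)) u.
Proof.
  apply (ex_derive_continuous (fun v => (c v)² * rhyp eps (s v) - s v * rhyp_prim eps (s v))).
  pose proof (hypot_gt0 eps eps_gt0 (s u)) as Hq. pose proof (sqrt_lt_R0 _ Hq).
  pose proof (rhyp_prim_arg_gt0 eps eps_gt0 (s u)).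
  unfold c, s, sinusoid, rhyp, rhyp_prim in *. auto_derive. repeat split; lra.
Qed.

Let L : R := ln (1 + 2 * rho / eps).

Lemma abs_mul_rhyp_prim_sinusoid_le (x v : R) : Rabs x <= rho ->
  Rabs (x * rhyp_prim eps (s v)) <= rho * L.
Proof.
  intro Hx. rewrite Rabs_mult. apply Rmult_le_compat; auto using Rabs_pos.
  apply abs_rhyp_prim_le; [exact eps_gt0 |]. apply abs_sinusoid_le; assumption.
Qed.

Lemma sqr_amplitude_mul_rhyp_le (v : R) :
  rho² * rhyp eps (s v) <= rho * (1 + L) + ((c v)² * rhyp eps (s v) - s v * rhyp_prim eps (s v)).
Proof.
  rewrite <- amplitude, <- (sinusoid_sqr_add P Q (w * v)). fold (s v) (c v).
  pose proof (sqr_mul_rhyp_le eps eps_gt0 (s v)).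
  assert (Hs : Rabs (s v) <= rho) by (apply abs_sinusoid_le; assumption).
  pose proof (Rle_abs (s v * rhyp_prim eps (s v))).
  pose proof (abs_mul_rhyp_prim_sinusoid_le (s v) v Hs). nra.
Qed.

Lemma sinusoid_rhyp_prim_diff_le (a b : R) :
  c b * rhyp_prim eps (s b) / w - c a * rhyp_prim eps (s a) / w <= 2 * rho * L / Rabs w.
Proof.
  assert (Hc : forall v, Rabs (c v * rhyp_prim eps (s v)) <= rho * L).
  { intro v. apply abs_mul_rhyp_prim_sinusoid_le. apply abs_sinusoid_le; [assumption |].
    rewrite <- Rsqr_neg, Rplus_comm. exact amplitude. }
  unfold Rdiv. rewrite <- Rmult_minus_distr_r.
  eapply Rle_trans; [apply Rle_abs |].
  rewrite Rabs_mult, Rabs_inv. apply Rmult_le_compat_r.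
  - left. apply Rinv_0_lt_compat, Rabs_pos_lt. exact w_neq0.
  - eapply Rle_trans; [apply Rabs_triang |]. rewrite Rabs_Ropp.
    pose proof (Hc a). pose proof (Hc b). lra.
Qed.

(* [rho^2 = s^2 + c^2], and [c^2 rhyp(s) - s rhyp_prim(s)] is the derivative of
   [c rhyp_prim(s) / w], while [s^2 rhyp(s) <= rho] and [s rhyp_prim(s) <= rho L]. *)
Lemma RInt_rhyp_sinusoid_le (a b : R) : a <= b ->
  rho * RInt (fun u => rhyp eps (sinusoid P Q (w * u))) a b <= (b - a) * (1 + L) + 2 * L / Rabs w.
Proof.
  intro Hab. change (fun u => rhyp eps (sinusoid P Q (w * u))) with (fun u => rhyp eps (s u)).
  assert (HL : 0 <= L).
  { unfold L. rewrite <- ln_1. apply ln_le; [lra |].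
    assert (0 <= rho / eps) by (apply Rdiv_le_0_compat; lra). lra. }
  assert (Hw : 0 < / Rabs w) by (apply Rinv_0_lt_compat, Rabs_pos_lt; exact w_neq0).
  set (Phi := fun v => c v * rhyp_prim eps (s v) / w).
  set (dPhi := fun v => (c v)² * rhyp eps (s v) - s v * rhyp_prim eps (s v)).
  assert (Hint : is_RInt dPhi a b (Phi b - Phi a)).
  { apply (is_RInt_derive Phi dPhi); intros v _;
      [apply is_derive_sinusoid_rhyp_prim | apply continuous_sinusoid_rhyp_prim_derive]. }
  assert (Hh : ex_RInt (fun v => rhyp eps (s v)) a b).
  { apply (ex_RInt_continuous (V := R_CompleteNormedModule)). intros v _.
    apply continuous_rhyp_sinusoid. }
  assert (Hsq : rho² * RInt (fun v => rhyp eps (s v)) a b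
                <= rho * ((b - a) * (1 + L) + 2 * L / Rabs w)).
  { replace (rho² * RInt (fun v => rhyp eps (s v)) a b)
      with (RInt (fun v => rho² * rhyp eps (s v)) a b) by exact (RInt_scal _ a b (rho²) Hh).
    eapply Rle_trans.
    - apply (RInt_le_is_RInt _ (fun v => rho * (1 + L) + dPhi v) a b _ Hab).
      + apply (ex_RInt_scal (fun v => rhyp eps (s v))). exact Hh.
      + apply (is_RInt_const_plus dPhi (rho * (1 + L)) a b _ Hint).
      + intros v _. apply sqr_amplitude_mul_rhyp_le.
    - pose proof (sinusoid_rhyp_prim_diff_le a b). unfold Phi. unfold Rdiv in *. nra. }
  destruct (Req_dec rho 0) as [-> | Hrho].
  - rewrite Rmult_0_l. apply Rplus_le_le_0_compat; [nra |]. unfold Rdiv. nra.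
  - apply Rmult_le_reg_l with rho; [lra |]. rewrite <- Rmult_assoc. exact Hsq.
Qed.

End SinusoidIntegral.

Lemma continuous_rhyp_dilate_sinusoid (eps A P Q t : R) : 0 < eps ->
  continuous (fun t => rhyp eps (A * sinusoid P Q t)) t.
Proof.
  intro Heps. apply (continuous_comp (fun t => A * sinusoid P Q t) (rhyp eps)).
  - apply (ex_derive_continuous (fun t => A * sinusoid P Q t)). unfold sinusoid. auto_derive. exact I.
  - apply continuous_rhyp. exact Heps.
Qed.

Lemma RInt_rhyp_circle_le (A Y P Q m : R) : 0 < A -> 0 < Y -> 0 < m -> P² + Q² = m² ->
  RInt (fun t => rhyp (/ Y) (A * sinusoid P Q t)) (- PI) PI
  <= ((6 * PI + 2) / A + 8 * (PI + 1)) * Rmax 1 (/ m) * ln (2 + Y).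
Proof.
  intros HA HY Hm HPQ. pose proof PI_RGT_0 as Hpi.
  assert (HiY : 0 < / Y) by (apply Rinv_0_lt_compat; exact HY).
  assert (Hibp := RInt_rhyp_sinusoid_le (/ Y) (A * P) (A * Q) (A * m) 1 HiY ltac:(nra)
                    ltac:(unfold Rsqr in *; nra) R1_neq_R0 (- PI) PI ltac:(lra)).
  rewrite (RInt_ext _ (fun t => rhyp (/ Y) (A * sinusoid P Q t))) in Hibp
    by (intros t _; unfold sinusoid; f_equal; rewrite Rmult_1_l; ring).
  set (I := RInt (fun t => rhyp (/ Y) (A * sinusoid P Q t)) (- PI) PI) in *.
  set (l := ln (2 + Y)). set (mu := Rmax 1 (/ m)).
  pose proof (ln_2_plus_gt_half Y (Rlt_le _ _ HY)) as Hl. fold l in Hl.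
  assert (Hmu1 : 1 <= mu) by apply Rmax_l.
  assert (Hmu : 1 <= m * mu).
  { apply Rle_trans with (m * / m); [rewrite Rinv_r; lra |].
    apply Rmult_le_compat_l; [lra | apply Rmax_r]. }
  assert (HL : ln (1 + 2 * (A * m) / / Y) <= 2 * (A * m) + l).
  { replace (2 * (A * m) / / Y) with (2 * (A * m) * Y) by (field; lra).
    apply ln_1_plus_mul_le; nra. }
  rewrite Rabs_R1, Rdiv_1_r in Hibp.
  apply Rmult_le_reg_l with (A * m); [nra |].
  replace (A * m * (((6 * PI + 2) / A + 8 * (PI + 1)) * mu * l))
    with ((6 * PI + 2) * (m * mu) * l + 8 * (PI + 1) * A * m * mu * l) by (field; lra).
  assert (0 <= (6 * PI + 2) * l * (m * mu - 1)) by (apply Rmult_le_pos; [apply Rmult_le_pos |]; lra).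
  assert (0 <= 8 * (PI + 1) * (A * m * l) * (mu - 1)).
  { apply Rmult_le_pos; [apply Rmult_le_pos; [lra |] |]; [| lra].
    apply Rmult_le_pos; [| lra]. apply Rmult_le_pos; lra. }
  set (L := ln (1 + 2 * (A * m) / / Y)) in *.
  assert ((2 * PI + 2) * L <= (2 * PI + 2) * (2 * (A * m) + l)) by (apply Rmult_le_compat_l; lra).
  assert (0 <= PI * (2 * l - 1)) by (apply Rmult_le_pos; lra).
  assert (0 <= (PI + 1) * (A * m) * (2 * l - 1)) by (apply Rmult_le_pos; [apply Rmult_le_pos |]; nra).
  lra.
Qed.

Section Radial.
Variables A B Y k : R.
Hypotheses (A_gt0 : 0 < A) (A_lt_B : A < B) (Y_gt0 : 0 < Y).

Lemma ex_RInt_capinv_dilate : ex_RInt (fun r => capinv (r * k) Y) A B.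
Proof.
  apply (ex_RInt_continuous (V := R_CompleteNormedModule)). intros r _.
  apply (continuous_comp (fun r => r * k) (fun x => capinv x Y)).
  - apply (ex_derive_continuous (fun r => r * k)). auto_derive. exact I.
  - apply continuous_capinv. exact Y_gt0.
Qed.

Lemma RInt_capinv_dilate_le_small : Rabs k * B <= / 2 ->
  RInt (fun r => capinv (r * k) Y) A B <= (B - A) * (sqrt 2 * rhyp (/ Y) (A * k)).
Proof.
  intro Hk. apply (RInt_le_is_RInt _ (fun _ => sqrt 2 * rhyp (/ Y) (A * k))); [lra | |
    apply (is_RInt_const (V := R_CompleteNormedModule) A B) |].
  - apply ex_RInt_capinv_dilate.
  - intros r Hr. apply capinv_le_rhyp; [exact Y_gt0 |].
    pose proof (Rabs_pos k). rewrite dist_int_small; rewrite !Rabs_mult, (Rabs_pos_eq r) by lra.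
    + rewrite Rabs_pos_eq by lra. nra.
    + nra.
Qed.

Lemma RInt_rhyp_sin_dilate_le : / 2 < Rabs k * B ->
  RInt (fun r => rhyp (/ Y) (sinusoid 0 (/ PI) (PI * k * r))) A B
  <= (3 * PI * (B - A) + 4 * B) * ln (2 + Y).
Proof.
  intro Hk. pose proof PI_RGT_0 as Hpi. pose proof PI2_1.
  pose proof (ln_2_plus_gt_half Y (Rlt_le _ _ Y_gt0)) as Hl.
  assert (HiY : 0 < / Y) by (apply Rinv_0_lt_compat; exact Y_gt0).
  assert (HiPI : 0 < / PI) by (apply Rinv_0_lt_compat; exact Hpi).
  assert (Hk0 : 0 < Rabs k) by (pose proof (Rabs_pos k); nra).
  assert (Hw : PI * k <> 0).
  { apply Rmult_integral_contrapositive. split; [lra |].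
    intros ->. rewrite Rabs_R0 in Hk0. lra. }
  assert (Hibp := RInt_rhyp_sinusoid_le (/ Y) 0 (/ PI) (/ PI) (PI * k) HiY (Rlt_le _ _ HiPI)
                    ltac:(unfold Rsqr; ring) Hw A B (Rlt_le _ _ A_lt_B)).
  set (l := ln (2 + Y)) in *. set (L := ln (1 + 2 * / PI / / Y)) in *.
  assert (HL : 0 <= L <= l).
  { assert (0 < 2 * / PI / / Y) by (apply Rdiv_lt_0_compat; lra).
    unfold L, l. rewrite <- ln_1. split; apply ln_le; try lra.
    replace (2 * / PI / / Y) with (2 / PI * Y) by (field; lra).
    assert (2 / PI < 1) by (apply Rmult_lt_reg_r with PI; [lra |]; field_simplify; lra).
    nra. }
  assert (Hik : 0 < / Rabs k < 2 * B).
  { split; [apply Rinv_0_lt_compat; exact Hk0 |].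
    apply Rmult_lt_reg_r with (Rabs k); [exact Hk0 |]. rewrite Rinv_l; lra. }
  apply Rmult_le_reg_l with (/ PI); [exact HiPI |].
  eapply Rle_trans; [exact Hibp |].
  rewrite Rabs_mult, (Rabs_pos_eq PI) by lra. unfold Rdiv. rewrite Rinv_mult.
  replace (/ PI * ((3 * PI * (B - A) + 4 * B) * l)) with (3 * (B - A) * l + / PI * (4 * B * l))
    by (field; lra).
  assert (2 * L * (/ PI * / Rabs k) <= / PI * (4 * B * l)).
  { replace (2 * L * (/ PI * / Rabs k)) with (/ PI * (2 * L * / Rabs k)) by ring.
    apply Rmult_le_compat_l; nra. }
  nra.
Qed.

Lemma RInt_capinv_dilate_le_large : / 2 < Rabs k * B ->
  RInt (fun r => capinv (r * k) Y) A B <= sqrt 2 * ((3 * PI * (B - A) + 4 * B) * ln (2 + Y)).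
Proof.
  intro Hk. set (h := fun r => rhyp (/ Y) (sinusoid 0 (/ PI) (PI * k * r))).
  assert (Hh : ex_RInt h A B).
  { apply (ex_RInt_continuous (V := R_CompleteNormedModule)). intros r _.
    apply continuous_rhyp_sinusoid, Rinv_0_lt_compat. exact Y_gt0. }
  apply Rle_trans with (RInt (fun r => sqrt 2 * h r) A B).
  - apply RInt_le; [lra | apply ex_RInt_capinv_dilate | apply (ex_RInt_scal h); exact Hh |].
    intros r _. unfold h, sinusoid.
    replace (PI * k * r) with (PI * (r * k)) by ring. rewrite Rmult_0_l, Rplus_0_l.
    apply capinv_le_rhyp_sin. exact Y_gt0.
  - replace (RInt (fun r => sqrt 2 * h r) A B) with (sqrt 2 * RInt h A B)
      by (symmetry; exact (RInt_scal h A B (sqrt 2) Hh)).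
    apply Rmult_le_compat_l; [apply sqrt_pos | exact (RInt_rhyp_sin_dilate_le Hk)].
Qed.

Lemma RInt_capinv_dilate_le :
  RInt (fun r => capinv (r * k) Y) A B
  <= sqrt 2 * ((3 * PI * (B - A) + 4 * B) * ln (2 + Y) + (B - A) * rhyp (/ Y) (A * k)).
Proof.
  pose proof PI_RGT_0. pose proof (ln_2_plus_gt_half Y (Rlt_le _ _ Y_gt0)).
  pose proof (rhyp_gt0 (/ Y) (Rinv_0_lt_compat _ Y_gt0) (A * k)).
  pose proof (sqrt_lt_R0 2 ltac:(lra)).
  assert (0 <= sqrt 2 * ((3 * PI * (B - A) + 4 * B) * ln (2 + Y))).
  { apply Rmult_le_pos; [lra |]. apply Rmult_le_pos; nra. }
  assert (0 <= (B - A) * (sqrt 2 * rhyp (/ Y) (A * k))) by (apply Rmult_le_pos; nra).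
  destruct (Rle_lt_dec (Rabs k * B) (/ 2)) as [Hk | Hk].
  - pose proof (RInt_capinv_dilate_le_small Hk). nra.
  - pose proof (RInt_capinv_dilate_le_large Hk). nra.
Qed.

End Radial.

Lemma integrand_polar (z : C) (Y t r : R) :
  integrand z Y t r = sqrt (capinv (r * sinusoid (Im z) (Re z) t) Y)
                      * sqrt (capinv (r * sinusoid (Re z) (- Im z) t) Y).
Proof.
  unfold integrand, cexpi, sinusoid, Cmult, RtoC, Re, Im. simpl.
  f_equal; f_equal; f_equal; ring.
Qed.

Lemma sqr_Im_add_sqr_Re (z : C) : (Im z)² + (Re z)² = (Cmod z)².
Proof. rewrite !Rsqr_pow2, Cmod2_alt. ring. Qed.

Lemma sqr_Re_add_sqr_opp_Im (z : C) : (Re z)² + (- Im z)² = (Cmod z)².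
Proof. rewrite <- Rsqr_neg, Rplus_comm. apply sqr_Im_add_sqr_Re. Qed.

Section Integrand.
Variables (z : C) (Y A B : R).
Hypotheses (Y_gt0 : 0 < Y) (A_gt0 : 0 < A) (A_lt_B : A < B).

Let k1 (t : R) : R := sinusoid (Im z) (Re z) t.
Let k2 (t : R) : R := sinusoid (Re z) (- Im z) t.

Lemma ex_RInt_integrand (t : R) : ex_RInt (integrand z Y t) A B.
Proof.
  destruct (sqrt_capinv_mul_lipschitz Y Y_gt0) as [M [HM0 HM]].
  apply (ex_RInt_continuous (V := R_CompleteNormedModule)). intros r0 _.
  apply continuous_lipschitz_at with (M * (Rabs (k1 t) + Rabs (k2 t))). intro r.
  rewrite !integrand_polar. eapply Rle_trans; [apply HM |].
  rewrite <- !Rmult_minus_distr_r, !Rabs_mult, Rmult_assoc.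
  apply Rmult_le_compat_l; [exact HM0 |]. unfold k1, k2. lra.
Qed.

Lemma continuous_RInt_integrand (t0 : R) : continuous (fun t => RInt (integrand z Y t) A B) t0.
Proof.
  destruct (sqrt_capinv_mul_lipschitz Y Y_gt0) as [M [HM0 HM]].
  apply continuous_RInt_lipschitz_param with (M * (2 * B * Cmod z)); [lra | exact ex_RInt_integrand |].
  intros t r Hr. rewrite !integrand_polar. eapply Rle_trans; [apply HM |].
  rewrite <- !Rmult_minus_distr_l, !Rabs_mult, (Rabs_pos_eq r) by lra.
  pose proof (Cmod_ge_0 z).
  pose proof (sinusoid_lipschitz _ _ _ t t0 (Cmod_ge_0 z) (sqr_Im_add_sqr_Re z)).
  pose proof (sinusoid_lipschitz _ _ _ t t0 (Cmod_ge_0 z) (sqr_Re_add_sqr_opp_Im z)).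
  rewrite Rmult_assoc. apply Rmult_le_compat_l; [exact HM0 |].
  assert (forall d, 0 <= d -> d <= Cmod z * Rabs (t - t0) -> r * d <= B * (Cmod z * Rabs (t - t0))).
  { intros d Hd0 Hd. apply Rmult_le_compat; lra. }
  assert (r * Rabs (k1 t - k1 t0) <= B * (Cmod z * Rabs (t - t0))) by auto using Rabs_pos.
  assert (r * Rabs (k2 t - k2 t0) <= B * (Cmod z * Rabs (t - t0))) by auto using Rabs_pos.
  unfold k1, k2 in *. lra.
Qed.

Lemma RInt_integrand_le (t : R) :
  RInt (integrand z Y t) A B
  <= sqrt 2 * ((3 * PI * (B - A) + 4 * B) * ln (2 + Y))
     + (B - A) * sqrt 2 / 2 * (rhyp (/ Y) (A * k1 t) + rhyp (/ Y) (A * k2 t)).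
Proof.
  assert (H1 := RInt_correct _ _ _ (ex_RInt_capinv_dilate A B Y (k1 t) Y_gt0)).
  assert (H2 := RInt_correct _ _ _ (ex_RInt_capinv_dilate A B Y (k2 t) Y_gt0)).
  eapply Rle_trans.
  - apply (RInt_le_is_RInt _ (fun r => / 2 * (capinv (r * k1 t) Y + capinv (r * k2 t) Y)));
      [lra | apply ex_RInt_integrand | exact (is_RInt_scal _ _ _ (/ 2) _ (is_RInt_plus _ _ _ _ _ _ H1 H2)) |].
    intros r _. rewrite integrand_polar.
    apply sqrt_mul_sqrt_le; left; apply capinv_gt0; exact Y_gt0.
  - pose proof (RInt_capinv_dilate_le A B Y (k1 t) A_gt0 A_lt_B Y_gt0).
    pose proof (RInt_capinv_dilate_le A B Y (k2 t) A_gt0 A_lt_B Y_gt0).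
    unfold scal, plus; simpl. unfold mult; simpl. lra.
Qed.

Lemma RInt_RInt_integrand_le : z <> 0 ->
  RInt (fun t => RInt (integrand z Y t) A B) (- PI) PI
  <= (2 * PI * sqrt 2 * (3 * PI * (B - A) + 4 * B)
      + (B - A) * sqrt 2 * ((6 * PI + 2) / A + 8 * (PI + 1))) * Rmax 1 (/ Cmod z) * ln (2 + Y).
Proof.
  intro Hz. apply Cmod_gt_0 in Hz. pose proof PI_RGT_0 as Hpi.
  assert (HiY : 0 < / Y) by (apply Rinv_0_lt_compat; exact Y_gt0).
  set (l := ln (2 + Y)). set (mu := Rmax 1 (/ Cmod z)).
  set (c1 := sqrt 2 * ((3 * PI * (B - A) + 4 * B) * l)).
  set (c2 := (6 * PI + 2) / A + 8 * (PI + 1)).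
  set (h1 := fun t => rhyp (/ Y) (A * k1 t)). set (h2 := fun t => rhyp (/ Y) (A * k2 t)).
  assert (E1 : ex_RInt h1 (- PI) PI).
  { apply (ex_RInt_continuous (V := R_CompleteNormedModule)). intros t _.
    apply continuous_rhyp_dilate_sinusoid. exact HiY. }
  assert (E2 : ex_RInt h2 (- PI) PI).
  { apply (ex_RInt_continuous (V := R_CompleteNormedModule)). intros t _.
    apply continuous_rhyp_dilate_sinusoid. exact HiY. }
  assert (Hh1 : RInt h1 (- PI) PI <= c2 * mu * l)
    by exact (RInt_rhyp_circle_le _ _ _ _ _ A_gt0 Y_gt0 Hz (sqr_Im_add_sqr_Re z)).
  assert (Hh2 : RInt h2 (- PI) PI <= c2 * mu * l)
    by exact (RInt_rhyp_circle_le _ _ _ _ _ A_gt0 Y_gt0 Hz (sqr_Re_add_sqr_opp_Im z)).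
  eapply Rle_trans.
  - apply (RInt_le_is_RInt _ (fun t => c1 + (B - A) * sqrt 2 / 2 * (h1 t + h2 t))); [lra | | |].
    + apply (ex_RInt_continuous (V := R_CompleteNormedModule)). intros t _.
      apply continuous_RInt_integrand.
    + exact (is_RInt_const_plus _ c1 _ _ _ (is_RInt_scal _ _ _ ((B - A) * sqrt 2 / 2) _
               (is_RInt_plus _ _ _ _ _ _ (RInt_correct _ _ _ E1) (RInt_correct _ _ _ E2)))).
    + intros t _. apply RInt_integrand_le.
  - unfold scal, plus; simpl. unfold mult; simpl.
    pose proof (ln_2_plus_gt_half Y (Rlt_le _ _ Y_gt0)). fold l in H.
    assert (Hmu : 1 <= mu) by apply Rmax_l.
    assert (Hs2 : 0 < sqrt 2) by (apply sqrt_lt_R0; lra).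
    assert (Hc1 : 0 <= PI * c1 * (mu - 1)).
    { apply Rmult_le_pos; [| lra]. apply Rmult_le_pos; [lra |].
      apply Rmult_le_pos; [lra |]. apply Rmult_le_pos; nra. }
    assert ((B - A) * sqrt 2 / 2 * (RInt h1 (- PI) PI + RInt h2 (- PI) PI)
            <= (B - A) * sqrt 2 / 2 * (2 * (c2 * mu * l))).
    { apply Rmult_le_compat_l; [| lra]. apply Rmult_le_pos; nra. }
    unfold c1 in *. lra.
Qed.

End Integrand.

Theorem lemma5 (A B : R) (hA : 0 < A) (hAB : A < B) :
  exists K : R, 0 < K /\
    forall (z : C) (Y : R), z <> RtoC 0 -> 0 < Y ->
      RInt (fun t => RInt (fun r => integrand z Y t r) A B) (- PI) PI
        <= K * Rmax 1 (/ Cmod z) * ln (2 + Y).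
Proof.
  pose proof PI_RGT_0. pose proof (sqrt_lt_R0 2 ltac:(lra)).
  assert (0 < (6 * PI + 2) / A) by (apply Rdiv_lt_0_compat; lra).
  exists (2 * PI * sqrt 2 * (3 * PI * (B - A) + 4 * B)
          + (B - A) * sqrt 2 * ((6 * PI + 2) / A + 8 * (PI + 1))).
  split.
  - apply Rplus_lt_0_compat; apply Rmult_lt_0_compat; nra.
  - intros z Y Hz HY. exact (RInt_RInt_integrand_le z Y A B HY hA hAB Hz).
Qed.
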